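(* Let $p$ be a binary word with exactly $2$ runs and length $l\ge3$. For every $n\ge l+2$, $B_{n,p}(M_{n,p}-1)=0$. In particular, $p$ has an internal zero at every $n\ge l+2$.
   Context: $c_p(w)$ is the number of occurrences of $p$ as a (not necessarily consecutive) subsequence of $w$; $B_{n,p}(k)$ is the number of binary words of length $n$ with $c_p(w)=k$; $M_{n,p}=\max\{c_p(w):w\in\{0,1\}^n\}$. A run is a maximal block of consecutive equal letters. $p$ has an internal zero at $n$ if there exist $0\le k_1<k_2<k_3$ with $B_{n,p}(k_1)\ne0$, $B_{n,p}(k_2)=0$, $B_{n,p}(k_3)\ne0$. *)

From mathcomp Require Import all_boot.
Set Implicit Arguments. Unset Strict Implicit. Unset Printing Implicit Defensive.

(* Binary words are sequences of booleans (false = 0, true = 1). *)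

(* c_p(w): number of occurrences of p as a (not necessarily consecutive)
   subsequence of w, i.e. number of index subsets of w (encoded as masks)
   selecting exactly the word p. *)
Definition occ (p w : seq bool) : nat :=
  #|[set m : (size w).-tuple bool | mask m w == p]|.

Definition B (n : nat) (p : seq bool) (k : nat) : nat :=
  #|[set w : n.-tuple bool | occ p w == k]|.

Definition M (n : nat) (p : seq bool) : nat :=
  \max_(w : n.-tuple bool) occ p w.

Definition nruns (s : seq bool) : nat :=
  if s is x :: s' then (count id (pairmap (fun a b => a != b) x s')).+1 else 0.

Definition internal_zero (n : nat) (p : seq bool) : Prop :=
  exists k1 k2 k3, [/\ k1 < k2 < k3, B n p k1 != 0, B n p k2 = 0 & B n p k3 != 0].

From mathcomp Require Import all_boot zify.
Set Implicit Arguments. Unset Strict Implicit. Unset Printing Implicit Defensive.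

(* A word with two runs and length >= 3 is p = x^(a+1) y^(b+1) with y = ~~x
   and a + b >= 1.  For a binary word w of length n with Z letters x put
     f(Z) = C(Z, a+1) * C(n-Z, b+1)         (the "profile" of p at length n).
   1. Counting.  From the first-letter recursion for occ: the sorted word
      x^Z y^(n-Z) has exactly f(Z) occurrences of p, every word has at most
      f(Z), and a word where some y precedes an x ("inverted") has at most
      f(Z) - C(Z-1, a) * C(n-Z-1, b).  Hence M_{n,p} = max_Z f(Z).
   2. Unimodal sequences.  If a sequence rises while a downward closed
      condition holds, falls afterwards, and consecutive positive values never
      differ by exactly 1, then it never takes the value (maximum - 1).
   3. The profile.  For n >= a+b+4, f is such a sequence: the ratio
      f(t+1)/f(t) compares (b+1)(t+1) with (a+1)(n-t), and a unit step would
      force a product of binomials to divide (a+1)(b+1), which it cannot.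
   4. Hence a sorted word never has M-1 occurrences, and for an inverted word
      the deficit would have to be 1, which only happens in a few degenerate
      shapes that contradict the maximality of M.  The internal zero of p is
      then witnessed by 0 (the word x^n), M - 1 and M. *)

Lemma card_tuple_cons n (P : pred (seq bool)) :
  #|[set m : n.+1.-tuple bool | P m]| =
  #|[set m : n.-tuple bool | P (true :: m)]| + #|[set m : n.-tuple bool | P (false :: m)]|.
Proof.
rewrite !cardsE -!sum1_card.
rewrite (reindex (fun u : bool * n.-tuple bool => [tuple of u.1 :: u.2])) /=; last first.
  exists (fun t : n.+1.-tuple bool => (thead t, [tuple of behead t])) => [[b t] _|t _] /=.
    by congr pair; apply: val_inj.
  by rewrite [RHS]tuple_eta.
rewrite big_mkcond /=.
transitivity (\sum_(u : bool * n.-tuple bool) (if P (u.1 :: (u.2 : seq bool)) then 1 else 0)).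
  by apply: eq_bigr => u _; rewrite unfold_in.
rewrite -(pair_big xpredT xpredT
  (fun b (t : n.-tuple bool) => if P (b :: (t : seq bool)) then 1 else 0)) /=.
rewrite big_bool /= !big_mkcond /=.
by congr addn; rewrite [RHS]big_mkcond /=; apply: eq_bigr => t _; rewrite unfold_in.
Qed.

Lemma occ_nil p : occ p [::] = (p == [::]).
Proof.
rewrite /occ; case: p => [|y p] /=.
  transitivity #|[set: 0.-tuple bool]|; last by rewrite cardsT card_tuple.
  by apply: eq_card => m; rewrite !inE mask0.
by apply: eq_card0 => m; rewrite !inE mask0.
Qed.

(* The standard recursion: an occurrence of p in y :: w either skips y, or
   matches y with the first letter of p. *)
Lemma occ_cons p y w :
  occ p (y :: w) = occ p w + (if p is z :: p' then (z == y) * occ p' w else 0).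
Proof.
rewrite /occ (card_tuple_cons (size w) (fun m => mask m (y :: w) == p)) addnC.
congr addn; case: p => [|z p']; first by apply: eq_card0 => m; rewrite !inE.
case: (eqVneq z y) => [->|nzy]; rewrite ?mul1n ?mul0n.
  by apply: eq_card => m; rewrite !inE /= eqseq_cons eqxx.
by apply: eq_card0 => m; rewrite !inE /= eqseq_cons eq_sym (negbTE nzy).
Qed.

Lemma occ_nseq y b w : occ (nseq b y) w = 'C(count_mem y w, b).
Proof.
elim: w b => [|z w IH] [|b] /=; rewrite ?occ_nil ?bin0 //.
  by rewrite occ_cons (IH 0) addn0 bin0.
rewrite occ_cons /= (IH b) (IH b.+1); case: (eqVneq z y) => [_|_].
  by rewrite mul1n add1n binS.
by rewrite mul0n addn0.
Qed.

Definition twoblock (x : bool) (a b : nat) : seq bool := nseq a x ++ nseq b (~~ x).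

Lemma size_twoblock x a b : size (twoblock x a b) = a + b.
Proof. by rewrite size_cat !size_nseq. Qed.

Lemma occ_twoblock0 x b w : occ (twoblock x 0 b) w = 'C(count_mem (~~ x) w, b).
Proof. exact: occ_nseq. Qed.

Lemma occ_twoblock_cons x a b y w :
  occ (twoblock x a.+1 b) (y :: w) = occ (twoblock x a.+1 b) w + (x == y) * occ (twoblock x a b) w.
Proof. by rewrite occ_cons. Qed.

Lemma eqb_negr (x : bool) : (x == ~~ x) = false.
Proof. by case: x. Qed.

Lemma negb_of_neq (x y : bool) : y != x -> y = ~~ x.
Proof. by case: x; case: y. Qed.

Lemma count_mem_pred (x : bool) w : x \in w -> exists Z, count_mem x w = Z.+1.
Proof. by move=> xw; exists (count_mem x w).-1; rewrite prednK // -has_count has_pred1. Qed.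

Lemma count_negb (x : bool) (w : seq bool) : count_mem (~~ x) w = size w - count_mem x w.
Proof.
rewrite -(count_predC (pred1 x) w) addKn.
by apply: eq_count => y; case: x; case: y.
Qed.

Lemma occ_sorted x a b k m :
  occ (twoblock x a b) (twoblock x k m) = 'C(k, a) * 'C(m, b).
Proof.
elim: k a => [|k IH] [|a] /=.
- by rewrite occ_twoblock0 bin0 mul1n count_nseq /= eqxx mul1n.
- rewrite bin0n mul0n; elim: m => [|m IHm] /=; first by rewrite occ_nil.
  by rewrite occ_twoblock_cons IHm eqb_negr.
- rewrite occ_twoblock0 bin0 mul1n /= count_cat !count_nseq /= eqxx mul1n.
  by case: (x).
- by rewrite occ_twoblock_cons eqxx mul1n !IH binS mulnDl.
Qed.

Lemma occ_twoblock_le x a b w :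
  occ (twoblock x a b) w <= 'C(count_mem x w, a) * 'C(count_mem (~~ x) w, b).
Proof.
elim: w a => [|y w IH] [|a]; rewrite ?occ_twoblock0 ?bin0 ?mul1n ?occ_nil //.
rewrite occ_twoblock_cons /=; case: (eqVneq y x) => [->|/negb_of_neq ->].
  by rewrite mul1n eqb_negr add0n add1n binS mulnDl leq_add.
rewrite eqxx mul0n addn0 add0n add1n.
by apply: leq_trans (IH a.+1) _; rewrite leq_mul2l leq_bin2l ?orbT.
Qed.

Fixpoint inverted (x : bool) (w : seq bool) : bool :=
  if w is y :: w' then (if y == x then inverted x w' else x \in w') else false.

Lemma inverted_mem x w : inverted x w -> x \in w.
Proof.
elim: w => [|y w IH] //=; case: (eqVneq y x) => [->|_]; first by rewrite inE eqxx.
by move=> xw; rewrite inE xw orbT.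
Qed.

Lemma sorted_of_not_inverted x w :
  ~~ inverted x w -> w = twoblock x (count_mem x w) (count_mem (~~ x) w).
Proof.
elim: w => [|y w IH] //=; case: (eqVneq y x) => [->|nyx].
  by rewrite eqb_negr add1n add0n => /IH {1}->.
rewrite (negb_of_neq nyx) eqxx add0n add1n => xw.
have /all_pred1P all_nx : all (pred1 (~~ x)) w.
  by apply/allP => z zw; apply/eqP/negb_of_neq; apply: contraNneq xw => <-.
by rewrite (count_memPn xw) {1}all_nx {2}all_nx count_nseq /= eqxx mul1n.
Qed.

Lemma occ_inverted x a b w : inverted x w ->
  occ (twoblock x a.+1 b.+1) w + 'C((count_mem x w).-1, a) * 'C((count_mem (~~ x) w).-1, b)
  <= 'C(count_mem x w, a.+1) * 'C(count_mem (~~ x) w, b.+1).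
Proof.
elim: w a => [|y w IH] a //=; case: (eqVneq y x) => [->|nyx].
  rewrite eqb_negr add1n add0n occ_twoblock_cons eqxx mul1n => inv.
  have [Z eZ] := count_mem_pred (inverted_mem inv); rewrite eZ in IH *.
  case: a => [|a].
    have := IH 0 inv; rewrite occ_twoblock0 !bin0 !mul1n !bin1 !mulSn.
    by move=> le; rewrite addnAC [X in _ <= X]addnC leq_add2r.
  have := leq_add (IH a.+1 inv) (IH a inv).
  by rewrite addnACA -!mulnDl -!binS.
rewrite (negb_of_neq nyx) eqxx add0n add1n occ_twoblock_cons eqb_negr mul0n addn0 => xw.
have [Z eZ] := count_mem_pred xw.
have occ_le := occ_twoblock_le x a.+1 b.+1 w.
rewrite eZ in occ_le *; rewrite /= [X in _ <= _ * X]binS mulnDr.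
by apply: leq_add occ_le _; rewrite leq_mul2r binS leq_addl orbT.
Qed.

(* If A + K Q = K P with 0 < A <= K, then A = K (P - Q) >= K, so K = A and
   the gap P - Q is exactly one. *)
Lemma gap_equation A K P Q : 0 < A <= K -> A + K * Q = K * P -> K = A /\ P = Q.+1.
Proof.
move=> /andP [A_gt0 le_AK] e.
have lt_QP : Q < P by rewrite ltnNge; apply/negP => le_PQ; have := leq_mul (leqnn K) le_PQ; lia.
have {}e : A = K * (P - Q) by rewrite mulnBr -e addnK.
have [d eP] : exists d, P - Q = d.+1 by exists (P - Q).-1; lia.
rewrite eP mulnS in e; split; nia.
Qed.

Lemma bin_ge_top m j : 0 < j < m -> m <= 'C(m, j).
Proof.
elim: m j => [|m IH] [|j] // /andP [_]; rewrite ltnS => lt_jm.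
rewrite binS; case: j lt_jm => [|j] lt_jm; first by rewrite bin1 bin0 addn1.
have := IH j.+1 lt_jm; have : 0 < 'C(m, j.+2) by rewrite bin_gt0.
lia.
Qed.

Lemma bin_eq1 m j : 'C(m, j) = 1 -> j = 0 \/ j = m.
Proof.
move=> e; case: (posnP j) => [|j_gt0]; [by left | right].
case: (ltngtP j m) => [lt_jm | lt_mj | //]; last by rewrite bin_small in e.
by have := bin_ge_top (ltac:(lia) : 0 < j < m); lia.
Qed.

(* The arithmetic core of the "no unit step" property of the profile: with
   K = C(a+1+u, a) C(b+1+v, b), the equation (a+1)(b+1) + K(b+1)(u+1) = K(a+1)(v+1)
   is impossible, because K >= (a+1)(b+1) with equality only in shapes where
   (a+1)(v+1) and (b+1)(u+1) do not differ by one. *)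
Lemma gap_ne a b u v : 0 < a + b -> 0 < u + v ->
  a.+1 * b.+1 + 'C(a.+1 + u, a) * 'C(b.+1 + v, b) * (b.+1 * u.+1)
    != 'C(a.+1 + u, a) * 'C(b.+1 + v, b) * (a.+1 * v.+1).
Proof.
move=> ab_gt0 uv_gt0; apply/eqP.
have binX : 0 < a -> a.+1 + u <= 'C(a.+1 + u, a) by move=> a_gt0; apply: bin_ge_top; lia.
have binY : 0 < b -> b.+1 + v <= 'C(b.+1 + v, b) by move=> b_gt0; apply: bin_ge_top; lia.
case: a ab_gt0 binX => [|a] ab_gt0 binX; case: b ab_gt0 binY => [|b] // _ binY.
- have := binY isT; rewrite bin0 mul1n => + /gap_equation []; nia.
- have := binX isT; rewrite bin0 muln1 => + /gap_equation []; nia.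
- have := binX isT; have := binY isT; move=> + + /gap_equation []; nia.
Qed.

Lemma leq_chain (g : nat -> nat) k j :
  k <= j -> (forall t, k <= t < j -> g t <= g t.+1) -> g k <= g j.
Proof.
elim: j => [|j IH]; first by rewrite leqn0 => /eqP ->.
rewrite leq_eqVlt ltnS => /orP [/eqP -> // | le_kj] step.
apply: leq_trans (IH le_kj _) (step j _); last by rewrite le_kj ltnSn.
by move=> t /andP [le_kt lt_tj]; apply: step; rewrite le_kt ltnS ltnW.
Qed.

Lemma ascent_between (g : nat -> nat) k m :
  k <= m -> g k < g m -> exists2 j, k <= j < m & g j < g j.+1.
Proof.
elim: m => [|m IH]; first by rewrite leqn0 => /eqP ->; rewrite ltnn.
rewrite leq_eqVlt ltnS => /orP [/eqP -> | le_km]; first by rewrite ltnn.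
case: (ltnP (g k) (g m)) => [lt_km _ | le_mk lt_k].
  have [j /andP [le_kj lt_jm] asc] := IH le_km lt_km.
  by exists j; rewrite // le_kj ltnS ltnW.
by exists m; [rewrite le_km ltnSn | exact: leq_ltn_trans lt_k].
Qed.

Definition unimodal_gapped (g : nat -> nat) (n : nat) (up : pred nat) : Prop :=
  [/\ forall t, up t.+1 -> up t,
      forall t, t < n -> up t -> g t <= g t.+1,
      forall t, t < n -> ~~ up t -> g t.+1 <= g t &
      forall t, t < n -> 0 < g t -> 0 < g t.+1 ->
        g t.+1 != (g t).+1 /\ g t != (g t.+1).+1].

Lemma unimodal_gapped_rev g n up : unimodal_gapped g n up ->
  unimodal_gapped (fun t => g (n - t)) n (fun t => ~~ up (n - t.+1)).
Proof.
case=> up_pred rise fall gapped; split => t.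
- apply: contra; case: (ltnP t.+1 n) => [lt_tn | le_nt].
    by rewrite -(subnSK lt_tn); apply: up_pred.
  by rewrite (_ : n - t.+2 = n - t.+1) //; lia.
- by move=> lt_tn; rewrite -(subnSK lt_tn); apply: fall; lia.
- by move=> lt_tn; rewrite negbK -(subnSK lt_tn); apply: rise; lia.
- move=> lt_tn; rewrite -(subnSK lt_tn) => pos1 pos0.
  by have [] := gapped (n - t.+1) (ltac:(lia)) pos0 pos1.
Qed.

(* Left of a maximum g m >= 2, such a sequence never takes the value g m - 1:
   some rise between k and m starts at a value >= g k (the sequence can only
   rise before that point) and, not being a unit step, would overshoot g m. *)
Lemma no_pred_max_before g n up k m : unimodal_gapped g n up ->
  k < m -> m <= n -> (forall t, t <= n -> g t <= g m) -> 1 < g m -> g k != (g m).-1.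
Proof.
case=> up_pred rise fall gapped lt_km le_mn gmax gm_gt1; apply/eqP => gk.
have [j /andP [le_kj lt_jm] asc] := ascent_between (ltnW lt_km) (ltac:(lia) : g k < g m).
have lt_jn : j < n by apply: leq_trans lt_jm le_mn.
have up_j : up j by apply: contraLR asc => /(fall j lt_jn); rewrite -leqNgt.
have up_le s : s <= j -> up s.
  move=> /subKn <-; elim: (j - s) => [|d IH]; rewrite ?subn0 // subnS.
  by case: (j - d) IH => // e /up_pred.
have gkj : g k <= g j.
  by apply: leq_chain le_kj _ => t /andP [le_kt lt_tj]; apply: rise (up_le t (ltnW lt_tj)); lia.
have [jump _] := gapped j lt_jn (ltac:(lia)) (ltac:(lia)).
have := gmax j.+1 lt_jn; move: jump; lia.
Qed.

(* The general case follows by reading the sequence backwards. *)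
Lemma no_pred_max g n up k m : unimodal_gapped g n up ->
  k <= n -> m <= n -> (forall t, t <= n -> g t <= g m) -> 1 < g m -> g k != (g m).-1.
Proof.
move=> ug le_kn le_mn gmax gm_gt1; case: (ltngtP k m) => [lt_km | lt_mk | -> ].
- exact: no_pred_max_before ug lt_km le_mn gmax gm_gt1.
- have := no_pred_max_before (unimodal_gapped_rev ug) (k := n - k) (m := n - m).
  rewrite !subKn //; apply; [lia | exact: leq_subr | | by []].
  by move=> t le_tn; apply: gmax; exact: leq_subr.
- by apply/eqP; lia.
Qed.

(* Number of occurrences of x^a (~~x)^b in the sorted word x^k (~~x)^(n-k). *)
Definition profile (a b n k : nat) : nat := 'C(k, a) * 'C(n - k, b).

Section Profile.
Variables a b n : nat.
Local Notation f := (profile a.+1 b.+1 n).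

Lemma profile_succ t :
  a.+1 * b.+1 * f t.+1 = 'C(t, a) * 'C(n - t.+1, b) * (t.+1 * (n - t.+1 - b)).
Proof.
rewrite /profile mulnACA -[a.+1 * _]mul_bin_diag mul_bin_left.
move: ('C(t, a)) ('C(n - t.+1, b)) => x y; nia.
Qed.

Lemma profile_self t :
  a.+1 * b.+1 * f t = 'C(t, a) * 'C(n - t.+1, b) * ((t - a) * (n - t)).
Proof.
rewrite /profile mulnACA mul_bin_left -[b.+1 * _]mul_bin_diag -subnS.
move: ('C(t, a)) ('C(n - t.+1, b)) => x y; nia.
Qed.

(* f t <= f (t+1) exactly when (b+1)(t+1) <= (a+1)(n-t) (for positive values). *)
Definition rising t := b.+1 * t.+1 <= a.+1 * (n - t).

Lemma rising_pred t : rising t.+1 -> rising t.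
Proof. rewrite /rising; nia. Qed.

Lemma step_factors t : t < n -> a <= t -> b <= n - t.+1 ->
  ((t - a) * (n - t) <= t.+1 * (n - t.+1 - b)) = rising t.
Proof.
move=> lt_tn le_at le_bt; rewrite /rising.
have [u et] : exists u, t = a + u by exists (t - a); lia.
subst t.
have [v ev] : exists v, n = (a + u).+1 + (b + v) by exists (n - (a + u).+1 - b); lia.
have -> : a + u - a = u by lia.
have -> : n - (a + u) = (b + v).+1 by lia.
have -> : n - (a + u).+1 - b = v by lia.
apply/idP/idP; nia.
Qed.

Lemma profile_rise t : t < n -> rising t -> f t <= f t.+1.
Proof.
move=> lt_tn up; rewrite -(@leq_pmul2l (a.+1 * b.+1)) // profile_succ profile_self.
case: (leqP a t) => le_at; last by rewrite bin_small.
case: (leqP b (n - t.+1)) => le_bt; last by rewrite (bin_small le_bt) muln0.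
by rewrite leq_mul2l step_factors ?up ?orbT.
Qed.

Lemma profile_fall t : t < n -> ~~ rising t -> f t.+1 <= f t.
Proof.
move=> lt_tn down; rewrite -(@leq_pmul2l (a.+1 * b.+1)) // profile_succ profile_self.
case: (leqP a t) => le_at; last by rewrite bin_small.
case: (leqP b (n - t.+1)) => le_bt; last by rewrite (bin_small le_bt) muln0.
by rewrite leq_mul2l ltnW ?orbT // ltnNge step_factors.
Qed.

Hypothesis ab_gt0 : 0 < a + b.
Hypothesis n_large : a.+1 + b.+1 + 2 <= n.

Lemma profile_no_unit_step t : t < n -> 0 < f t -> 0 < f t.+1 ->
  f t.+1 != (f t).+1 /\ f t != (f t.+1).+1.
Proof.
move=> lt_tn ft_gt0 ft1_gt0.
have [lt_at lt_bt] : a < t /\ b < n - t.+1.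
  by move: ft_gt0 ft1_gt0; rewrite /profile !muln_gt0 !bin_gt0 => /andP [? ?] /andP [? ?].
have [u et] : exists u, t = a.+1 + u by exists (t - a.+1); lia.
have [v ev] : exists v, n - t.+1 = b.+1 + v by exists (n - t.+1 - b.+1); lia.
have uv_gt0 : 0 < u + v by lia.
have e1 : a.+1 * b.+1 * f t.+1 =
    'C(a.+1 + u, a) * 'C(b.+1 + v, b) * (a.+1 * v.+1 + u.+1 * v.+1).
  by rewrite profile_succ ev et -mulnDl; congr (_ * (_ * _)); lia.
have e2 : a.+1 * b.+1 * f t =
    'C(a.+1 + u, a) * 'C(b.+1 + v, b) * (b.+1 * u.+1 + u.+1 * v.+1).
  by rewrite profile_self ev et [b.+1 * _]mulnC -mulnDr; congr (_ * (_ * _)); lia.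
split; apply/eqP => e.
- have /negP := gap_ne ab_gt0 uv_gt0; apply; apply/eqP.
  by move: e1 e2; rewrite e mulnS !mulnDr; lia.
- have /negP := @gap_ne b a v u (ltac:(lia)) (ltac:(lia)); apply; apply/eqP.
  by move: e1 e2; rewrite e mulnS !mulnDr; lia.
Qed.

Lemma profile_unimodal_gapped : unimodal_gapped f n rising.
Proof.
split; [exact: rising_pred | exact: profile_rise | exact: profile_fall |
        exact: profile_no_unit_step].
Qed.

Lemma profile_gt2 : 2 < f a.+1.
Proof.
rewrite /profile binn mul1n; apply: leq_trans (bin_ge_top _); lia.
Qed.

(* A count c that falls short of f Z by the deficit of an inverted word is
   never (max f) - 1: the deficit would have to be 1, forcing a = 0 and
   n - Z = b + 1, or b = 0 and Z = a + 1, and then a neighbouring value of f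
   exceeds f Z. *)
Lemma deficit_not_pred_max Z c Mx : Z <= n -> (forall t, t <= n -> f t <= Mx) -> 2 < Mx ->
  c + 'C(Z.-1, a) * 'C((n - Z).-1, b) <= f Z -> c != Mx.-1.
Proof.
move=> le_Zn fmax Mx_gt2 deficit; apply/eqP => ec.
have fZ_gt0 : 0 < f Z by lia.
have [lt_aZ lt_bZ] : a < Z /\ b < n - Z.
  by move: fZ_gt0; rewrite /profile muln_gt0 !bin_gt0 => /andP [].
have : 0 < 'C(Z.-1, a) * 'C((n - Z).-1, b) by rewrite muln_gt0 !bin_gt0; lia.
have := fmax Z le_Zn; move: deficit; set D := _ * _ => deficit fZ_le D_gt0.
have /eqP : D = 1 by lia.
rewrite muln_eq1 => /andP [/eqP /bin_eq1 [a0 | aZ] /eqP /bin_eq1 [b0 | bZ]]; try lia.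
- have eO : n - Z = b.+1 by lia.
  have fZ : f Z = Z by rewrite /profile a0 eO bin1 binn muln1.
  have := fmax Z.-1 (leq_trans (leq_pred Z) le_Zn).
  rewrite /profile a0 bin1 (_ : n - Z.-1 = b.+2) ?binSn; nia.
- have eZ : Z = a.+1 by lia.
  have fZ : f Z = n - Z by rewrite /profile b0 eZ bin1 binn mul1n.
  have := fmax Z.+1 (ltac:(lia)).
  rewrite /profile b0 bin1 eZ binSn (_ : n - a.+2 = (n - Z).-1); nia.
Qed.
End Profile.

Lemma count_mem_le_size n (w : n.-tuple bool) y : count_mem y w <= n.
Proof. by apply: leq_trans (count_size _ _) _; rewrite size_tuple. Qed.

Lemma occ_le_profile x a b n (w : n.-tuple bool) :
  occ (twoblock x a b) w <= profile a b n (count_mem x w).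
Proof.
by apply: leq_trans (occ_twoblock_le x a b w) _; rewrite count_negb size_tuple.
Qed.

Lemma sorted_word_occ x a b n k : k <= n ->
  exists w : n.-tuple bool, occ (twoblock x a b) w = profile a b n k.
Proof.
move=> le_kn; have sz : size (twoblock x k (n - k)) == n by rewrite size_twoblock subnKC.
by exists (Tuple sz); rewrite /= occ_sorted.
Qed.

Lemma M_twoblock x a b n : M n (twoblock x a b) = \max_(k < n.+1) profile a b n k.
Proof.
apply/eqP; rewrite eqn_leq; apply/andP; split; apply/bigmax_leqP.
  move=> w _; apply: leq_trans (occ_le_profile x a b w) _.
  by apply: (leq_bigmax (Ordinal (count_mem_le_size w x : _ < n.+1))).
move=> k _; have [w <-] := sorted_word_occ x a b (ltn_ord k : k <= n).
exact: leq_bigmax.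
Qed.

Lemma profile_le_M x a b n t : t <= n -> profile a b n t <= M n (twoblock x a b).
Proof. by move=> le_tn; rewrite M_twoblock; apply: (leq_bigmax (Ordinal (le_tn : t < n.+1))). Qed.

Lemma M_attained x a b n : exists2 k, k <= n & M n (twoblock x a b) = profile a b n k.
Proof.
have [k ek] := eq_bigmax (fun k : 'I_n.+1 => profile a b n k) (ltac:(by rewrite card_ord)).
by exists k; [rewrite -ltnS | rewrite M_twoblock].
Qed.

Lemma M_gt2 x a b n : 0 < a + b -> a.+1 + b.+1 + 2 <= n -> 2 < M n (twoblock x a.+1 b.+1).
Proof.
move=> ab_gt0 n_large.
apply: leq_trans (profile_gt2 ab_gt0 n_large) _; apply: profile_le_M; lia.
Qed.

(* No word has exactly M - 1 occurrences of p = x^(a+1) (~~x)^(b+1):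
   sorted words by unimodality of the profile, inverted ones by their deficit. *)
Lemma occ_ne_pred_M x a b n (w : n.-tuple bool) : 0 < a + b -> a.+1 + b.+1 + 2 <= n ->
  occ (twoblock x a.+1 b.+1) w != (M n (twoblock x a.+1 b.+1)).-1.
Proof.
move=> ab_gt0 n_large; have fmax := @profile_le_M x a.+1 b.+1 n.
have Z_le := count_mem_le_size w x.
have eO : count_mem (~~ x) w = n - count_mem x w by rewrite count_negb size_tuple.
case: (boolP (inverted x w)) => [inv | /sorted_of_not_inverted sorted].
  apply: (deficit_not_pred_max ab_gt0 n_large Z_le fmax (M_gt2 x ab_gt0 n_large)).
  by have := occ_inverted a b inv; rewrite eO.
have [ks le_ksn eM] := M_attained x a.+1 b.+1 n.
rewrite {1}sorted occ_sorted eO eM.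
apply: no_pred_max (profile_unimodal_gapped ab_gt0 n_large) Z_le le_ksn _ _; rewrite -eM //.
exact: ltnW (M_gt2 x ab_gt0 n_large).
Qed.

Lemma B_occ_neq0 n p (w : n.-tuple bool) : B n p (occ p w) != 0.
Proof. by rewrite /B -lt0n card_gt0; apply/set0Pn; exists w; rewrite inE. Qed.

Lemma M_realized n p : exists w : n.-tuple bool, occ p w = M n p.
Proof.
have tuples_gt0 : 0 < #|{: n.-tuple bool}| by rewrite card_tuple card_bool expn_gt0.
have [w ew] := @eq_bigmax _ (fun w : n.-tuple bool => occ p w) tuples_gt0.
by exists w; rewrite /M ew.
Qed.

Lemma no_change_nseq (x : bool) s :
  count id (pairmap (fun u v => u != v) x s) = 0 -> s = nseq (size s) x.
Proof.
elim: s x => [|y s IH] x //=.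
by case: (eqVneq x y) => [<- /= /IH {1}-> //|].
Qed.

Lemma one_change (x : bool) s : count id (pairmap (fun u v => u != v) x s) = 1 ->
  exists a b, s = nseq a x ++ nseq b.+1 (~~ x).
Proof.
elim: s x => [|y s IH] x //=.
case: (eqVneq x y) => [<- /IH [a [b ->]] | nxy [] /no_change_nseq sy]; first by exists a.+1, b.
by exists 0, (size s); rewrite {1}sy (negb_of_neq (y := y) (x := x)) // eq_sym.
Qed.

Lemma two_runs p : nruns p = 2 -> exists x a b, p = twoblock x a.+1 b.+1.
Proof. by case: p => [|x s] //= [] /one_change [a [b ->]]; exists x, a, b. Qed.

Theorem mainTheorem16 (p : seq bool) :
  nruns p = 2 -> 3 <= size p ->
  forall n : nat, size p + 2 <= n ->
    B n p (M n p).-1 = 0 /\ internal_zero n p.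
Proof.
move=> /two_runs [x [a [b ->]]]; rewrite size_twoblock => size_ge3 n n_large.
have ab_gt0 : 0 < a + b by lia.
have B_pred : B n (twoblock x a.+1 b.+1) (M n (twoblock x a.+1 b.+1)).-1 = 0.
  by apply: eq_card0 => w; rewrite !inE (negbTE (@occ_ne_pred_M x a b n w ab_gt0 n_large)).
split=> //; exists 0, (M n (twoblock x a.+1 b.+1)).-1, (M n (twoblock x a.+1 b.+1)).
have := M_gt2 x ab_gt0 n_large; split => //; first lia.
- have [w occ0] := sorted_word_occ x a.+1 b.+1 (leqnn n).
  by have := B_occ_neq0 (twoblock x a.+1 b.+1) w; rewrite occ0 /profile subnn bin0n muln0.
- have [w wM] := M_realized n (twoblock x a.+1 b.+1).
  by have := B_occ_neq0 (twoblock x a.+1 b.+1) w; rewrite wM.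
Qed.
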